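(* Let $d\ge 3$ and let $j$ be an integer with $d\le j\le \left\lfloor \frac{3(d-1)}{2}\right\rfloor$. (a) If $d$ is odd and $j-d$ is even, then $\operatorname{triv}(d,j)=\left\lfloor \frac{3d-2j-3}{6}\right\rfloor$ and $\operatorname{sign}(d,j)=\left\lfloor \frac{3d-2j-3}{6}\right\rfloor+1$. (b) If $d$ is odd and $j-d$ is odd, then $\operatorname{triv}(d,j)=\left\lfloor \frac{3d-2j-3}{6}\right\rfloor+1$ and $\operatorname{sign}(d,j)=\left\lfloor \frac{3d-2j-3}{6}\right\rfloor$. (c) If $d$ is even, then $\operatorname{triv}(d,j)=\operatorname{sign}(d,j)=\left\lfloor \frac{3d-2j}{6}\right\rfloor$.
   Context: $\Bbbk$ is an algebraically closed field of characteristic $0$. For an integer $d\ge 1$, $A(d)=\Bbbk[x_1,x_2,x_3]/(x_1^d,x_2^d,x_3^d)=\bigoplus_j A(d)_j$ with its standard grading. $S_3$ acts on $A(d)$ by permuting variables. The linear map $E:A(d)_{j+1}\to A(d)_j$ is defined on the monomial basis by $E(x_1^{a_1}x_2^{a_2}x_3^{a_3})=\sum_{k=1}^{3} a_k(d-a_k)\,x_1^{a_1}\cdots x_k^{a_k-1}\cdots x_3^{a_3}$; it commutes with the $S_3$-action. $\operatorname{triv}(d,j)$ and $\operatorname{sign}(d,j)$ denote the multiplicities of the trivial and sign representations of $S_3$ in $\operatorname{Ker}(E)\cap A(d)_j$. *)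

From HB Require Import structures.
From mathcomp Require Import all_boot all_order all_algebra all_fingroup.
Set Implicit Arguments. Unset Strict Implicit. Unset Printing Implicit Defensive.
Import GRing.Theory.
Local Open Scope ring_scope.

(* Monomials x1^a1 x2^a2 x3^a3 of A(d) = k[x1,x2,x3]/(x1^d,x2^d,x3^d):
   exponent vectors a : 'I_3 -> 'I_d (0 <= a_k < d).  These form a basis of A(d). *)
Definition mon (d : nat) := {ffun 'I_3 -> 'I_d}.
Definition mdeg (d : nat) (a : mon d) : nat := (\sum_(k < 3) (a k : nat))%N.
Definition nmon (d : nat) : nat := #|{: mon d}|.

Section A.
Variable F : fieldType.
Variable d : nat.

(* Elements of A(d) are coordinate row vectors 'rV[F]_(nmon d) in the monomial
   basis (ordered by enum_val).  Linear maps act on the right: v *m M. *)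

(* coefficient of x^b in E(x^a) = sum_k a_k (d - a_k) x^(a - e_k) *)
Definition E_coef (a b : mon d) : F :=
  \sum_(k < 3) (if ((a k : nat) == (b k).+1) && [forall l, (l != k) ==> (a l == b l)]
                then ((a k : nat) * (d - a k))%N%:R else 0).

Definition Emx : 'M[F]_(nmon d) :=
  \matrix_(i, j) E_coef (enum_val i) (enum_val j).

Definition degmx (j : nat) : 'M[F]_(nmon d) :=
  \matrix_(i, i') ((i == i') && (mdeg (enum_val i) == j))%:R.

(* S_3 permutes the variables: sigma sends x_k to x_(sigma k), hence
   x^a to x^(a o sigma^-1). *)
Definition mon_act (s : 'S_3) (a : mon d) : mon d := [ffun k => a (s^-1 k)%g].

Definition permx (s : 'S_3) : 'M[F]_(nmon d) :=
  \matrix_(i, i') (enum_val i' == mon_act s (enum_val i))%:R.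

Definition KerEj (j : nat) : 'M[F]_(nmon d) :=
  (kermx Emx :&: kermx (1%:M - degmx j))%MS.

Definition triv_space (j : nat) : 'M[F]_(nmon d) :=
  (KerEj j :&: \bigcap_(s : 'S_3) kermx (permx s - 1%:M))%MS.
Definition sign_space (j : nat) : 'M[F]_(nmon d) :=
  (KerEj j :&: \bigcap_(s : 'S_3) kermx (permx s - (-1) ^+ odd_perm s *: 1%:M))%MS.

End A.

(* multiplicities of the trivial / sign representation (= dimensions of the
   corresponding isotypic components, each irreducible being 1-dimensional) *)
Definition triv (F : fieldType) (d j : nat) : nat := \rank (triv_space F d j).
Definition sign (F : fieldType) (d j : nat) : nat := \rank (sign_space F d j).

From HB Require Import structures.
From mathcomp Require Import all_boot all_order all_algebra all_fingroup.
From mathcomp Require Import zify ring.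
Set Implicit Arguments. Unset Strict Implicit. Unset Printing Implicit Defensive.
Import GRing.Theory.

(* Let L be multiplication by x1 + x2 + x3.  On A(d)_i the operators satisfy
   the sl_2 relation LE - EL = 3(d - 1) - 2i, so below the middle degree
   (2i < 3(d - 1)) the composite E o L is injective on A(d)_i, and hence
   E : A(d)_(i+1) -> A(d)_i is onto.  As E and L commute with S_3 this holds on
   every isotypic component, so triv(d, i + 1) and sign(d, i + 1) are differences
   of the dimensions of the trivial, resp. sign, components of A(d)_(i+1) and
   A(d)_i.  These components
   have bases of orbit sums indexed by the sorted, resp. strictly increasing,
   exponent vectors of the given degree, and counting those gives the formulas. *)

Section Shifts.
Variable d : nat.
Implicit Types (a b : mon d) (k l : 'I_3).

(* [incr k a] is a with its k-th exponent raised by one; it is [a] itself when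
   that exponent is already d - 1. *)
Definition incr k a : mon d :=
  [ffun l => if l == k then insubd (a l) (a l).+1 else a l].
Definition decr k a : mon d :=
  [ffun l => if l == k then insubd (a l) (a l).-1 else a l].

Lemma mon_eq a b : (forall l, a l = b l :> nat) -> a = b.
Proof. by move=> ab; apply/ffunP => l; apply/val_inj/ab. Qed.

Lemma incrE k a l :
  incr k a l = (if (l == k) && ((a l).+1 < d) then (a l).+1 else a l) :> nat.
Proof. by rewrite ffunE; case: eqP => // _; rewrite val_insubd. Qed.

Lemma decrE k a l : decr k a l = (if l == k then (a l).-1 else a l) :> nat.
Proof.
rewrite ffunE; case: eqP => // _.
by rewrite val_insubd (leq_ltn_trans (leq_pred _) (ltn_ord _)).
Qed.

Lemma incr_id k a : (a k).+1 < d -> incr k a k = (a k).+1 :> nat.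
Proof. by move=> lt; rewrite incrE eqxx lt. Qed.

Lemma incr_other k l a : k != l -> incr k a l = a l :> nat.
Proof. by move=> kl; rewrite incrE eq_sym (negbTE kl). Qed.

Lemma decr_id k a : decr k a k = (a k).-1 :> nat.
Proof. by rewrite decrE eqxx. Qed.

Lemma decr_other k l a : k != l -> decr k a l = a l :> nat.
Proof. by move=> kl; rewrite decrE eq_sym (negbTE kl). Qed.

Lemma incrK k a : (a k).+1 < d -> decr k (incr k a) = a.
Proof. by move=> lt; apply: mon_eq => l; rewrite decrE incrE; case: eqP => [->|]; rewrite ?lt. Qed.

Lemma decrK k a : 0 < a k -> incr k (decr k a) = a.
Proof.
move=> pos; apply: mon_eq => l; rewrite incrE decrE.
by case: eqP => [->|] //=; rewrite prednK // ltn_ord.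
Qed.

Lemma decr_incrC k l a : k != l -> decr l (incr k a) = incr k (decr l a).
Proof.
move=> kl; apply: mon_eq => m; rewrite !decrE !incrE !decrE.
case: (eqVneq m l) => [ml|ml]; case: (eqVneq m k) => [mk|mk] //=.
by move: kl; rewrite -ml -mk eqxx.
Qed.

Lemma mdeg_incr k a : (a k).+1 < d -> mdeg (incr k a) = (mdeg a).+1.
Proof.
move=> lt; rewrite /mdeg (bigD1 k) //= [in RHS](bigD1 k) //= incr_id // addSn.
by congr (_ + _).+1; apply: eq_bigr => l lk; rewrite incr_other // eq_sym.
Qed.

Lemma mdeg_decr k a : 0 < a k -> mdeg (decr k a) = (mdeg a).-1.
Proof.
move=> pos; rewrite /mdeg (bigD1 k) //= [in RHS](bigD1 k) //= decr_id.
rewrite (eq_bigr (fun l => a l : nat)); first by rewrite -subn1 addnBAC // subn1.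
by move=> l lk; rewrite decr_other // eq_sym.
Qed.

Lemma mdeg_act (s : 'S_3) a : mdeg (mon_act s a) = mdeg a.
Proof.
rewrite /mdeg [RHS](reindex_inj (@perm_inj _ s^-1)%g) /=.
by apply: eq_bigr => k _; rewrite ffunE.
Qed.

Lemma mon_actM (s t : 'S_3) a : mon_act t (mon_act s a) = mon_act (s * t)%g a.
Proof. by apply/ffunP => k; rewrite !ffunE invMg permM. Qed.

Lemma mon_act1 a : mon_act 1%g a = a.
Proof. by apply/ffunP => k; rewrite ffunE invg1 perm1. Qed.

Lemma mon_actK (s : 'S_3) : cancel (@mon_act d s) (mon_act s^-1%g).
Proof. by move=> a; rewrite mon_actM mulgV mon_act1. Qed.

Lemma mon_actKV (s : 'S_3) : cancel (@mon_act d s^-1%g) (mon_act s).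
Proof. by move=> a; rewrite mon_actM mulVg mon_act1. Qed.

Lemma mon_act_incr (s : 'S_3) k a :
  mon_act s^-1%g (incr (s k) a) = incr k (mon_act s^-1%g a).
Proof.
apply: mon_eq => l; rewrite ffunE invgK !incrE ffunE invgK.
by rewrite (inj_eq perm_inj).
Qed.

Lemma mon_act_decr (s : 'S_3) k a :
  mon_act s^-1%g (decr (s k) a) = decr k (mon_act s^-1%g a).
Proof.
apply: mon_eq => l; rewrite ffunE invgK !decrE ffunE invgK.
by rewrite (inj_eq perm_inj).
Qed.

End Shifts.

Definition i0 : 'I_3 := Ordinal (isT : 0 < 3).
Definition i1 : 'I_3 := Ordinal (isT : 1 < 3).
Definition i2 : 'I_3 := Ordinal (isT : 2 < 3).

Lemma ord3P (k : 'I_3) : [\/ k = i0, k = i1 | k = i2].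
Proof.
by case: k => [[|[|[|//]]] lt]; [constructor 1 | constructor 2 | constructor 3]; apply: val_inj.
Qed.

Section Representatives.
Variable d : nat.
Implicit Types (a b : mon d).

Definition sorted_mon a := (a i0 <= a i1 <= a i2).
Definition strict_mon a := (a i0 < a i1 < a i2).

Lemma mdeg3 a : mdeg a = a i0 + a i1 + a i2.
Proof.
rewrite /mdeg !big_ord_recl big_ord0 addn0 addnA.
by congr (_ + _ + _); congr (nat_of_ord (a _)); apply: val_inj.
Qed.

Lemma mon_eq3 a b :
  a i0 = b i0 :> nat -> a i1 = b i1 :> nat -> a i2 = b i2 :> nat -> a = b.
Proof. by move=> e0 e1 e2; apply: mon_eq => k; case: (ord3P k) => ->. Qed.

Lemma exists_sorted_act b : exists s : 'S_3, sorted_mon (mon_act s b).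
Proof.
suff [t sorted_t] : exists t : 'S_3, b (t i0) <= b (t i1) <= b (t i2).
  by exists t^-1%g; rewrite /sorted_mon !ffunE invgK.
case: (leqP (b i0) (b i1)) => h01; case: (leqP (b i1) (b i2)) => h12;
  case: (leqP (b i0) (b i2)) => h02;
  first [ exists 1%g; rewrite !perm1; lia
        | exists (tperm i1 i2); rewrite !permE /=; lia
        | exists (tperm i0 i1); rewrite !permE /=; lia
        | exists (tperm i0 i2); rewrite !permE /=; lia
        | exists (tperm i1 i2 * tperm i0 i1)%g; rewrite !permM !permE /=; lia
        | exists (tperm i0 i1 * tperm i1 i2)%g; rewrite !permM !permE /=; lia ].
Qed.

Lemma sorted_min a k : sorted_mon a -> a i0 <= a k.
Proof. by case/andP => h01 h12; case: (ord3P k) => -> //; lia. Qed.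

Lemma sorted_max a k : sorted_mon a -> a k <= a i2.
Proof. by case/andP => h01 h12; case: (ord3P k) => -> //; lia. Qed.

(* The extreme exponents of two sorted monomials in one orbit agree, hence so
   do the middle ones by degree. *)
Lemma sorted_act_eq a s : sorted_mon a -> sorted_mon (mon_act s a) -> mon_act s a = a.
Proof.
move=> sa ssa; have := mdeg_act s a; rewrite !mdeg3.
have := sorted_min (s i0) ssa; have := sorted_max (s i2) ssa.
have := sorted_min (s^-1 i0)%g sa; have := sorted_max (s^-1 i2)%g sa.
rewrite !ffunE !permK => *; apply: mon_eq3; rewrite !ffunE; lia.
Qed.

Lemma strict_sorted a : strict_mon a -> sorted_mon a.
Proof. by case/andP => h01 h12; rewrite /sorted_mon; lia. Qed.

Lemma strict_mon_inj a k l : strict_mon a -> a k = a l :> nat -> k = l.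
Proof. by case/andP => h01 h12; case: (ord3P k) => ->; case: (ord3P l) => -> //; lia. Qed.

Lemma strict_act_eq a s : strict_mon a -> mon_act s a = a -> s = 1%g.
Proof.
move=> sa sfix; apply/permP => k.
have sk : (s^-1 k)%g = k by apply: (strict_mon_inj sa); rewrite -[in RHS]sfix ffunE.
by rewrite perm1 -{1}sk permKV.
Qed.

Lemma tperm_act_eq a p q : a p = a q -> mon_act (tperm p q) a = a.
Proof.
move=> apq; apply/ffunP => k; rewrite ffunE tpermV permE /=.
by case: eqP => [->|_]; [rewrite apq | case: eqP => [->|]].
Qed.

End Representatives.

Section Coordinates.
Local Open Scope ring_scope.
Variables (F : fieldType) (d : nat).
Local Notation rV := 'rV[F]_(nmon d).

Definition mcoef (v : rV) (a : mon d) : F := v 0 (enum_rank a).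

Lemma mcoef_inj (v w : rV) : mcoef v =1 mcoef w -> v = w.
Proof. by move=> vw; apply/rowP => i; have := vw (enum_val i); rewrite /mcoef enum_valK. Qed.

Lemma mcoef0 a : mcoef 0 a = 0. Proof. by rewrite /mcoef mxE. Qed.

Lemma mcoefB v w a : mcoef (v - w) a = mcoef v a - mcoef w a.
Proof. by rewrite /mcoef !mxE. Qed.

Lemma mcoefZ c v a : mcoef (c *: v) a = c * mcoef v a.
Proof. by rewrite /mcoef mxE. Qed.

Lemma mcoef_eq0 v : (forall a, mcoef v a = 0) -> v = 0.
Proof. by move=> v0; apply: mcoef_inj => a; rewrite v0 mcoef0. Qed.

Lemma mcoef_mulmx (M : mon d -> mon d -> F) v b :
  mcoef (v *m \matrix_(i, j) M (enum_val i) (enum_val j)) b = \sum_a mcoef v a * M a b.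
Proof.
rewrite /mcoef mxE (reindex (@enum_rank _)) /=; last exact/onW_bij/enum_rank_bij.
by apply: eq_bigr => a _; rewrite mxE !enum_rankK.
Qed.

Lemma mcoef_degmx v i b : mcoef (v *m degmx F d i) b = (mdeg b == i)%:R * mcoef v b.
Proof.
rewrite /mcoef mxE (bigD1 (enum_rank b)) //= big1 ?addr0.
  by rewrite mxE eqxx enum_rankK mulrC.
by move=> k /negbTE nk; rewrite mxE nk mulr0.
Qed.

End Coordinates.


Section Operators.
Local Open Scope ring_scope.
Variables (F : fieldType) (d : nat).
Local Notation rV := 'rV[F]_(nmon d).
Local Notation E := (Emx F d).
Implicit Types (a b : mon d) (k : 'I_3) (v : rV).

Definition covers k a b : bool :=
  ((a k : nat) == (b k).+1) && [forall l, (l != k) ==> (a l == b l)].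

Definition wt (x : nat) : F := (x * (d - x))%:R.

Lemma E_coefE a b : @E_coef F d a b = \sum_k (if covers k a b then wt (a k) else 0).
Proof. by []. Qed.

(* Multiplication by x1 + x2 + x3. *)
Definition Lmx : 'M[F]_(nmon d) :=
  \matrix_(i, j) \sum_k (covers k (enum_val j) (enum_val i))%:R.

Lemma coversE k a b : covers k a b = ((b k).+1 < d)%N && (a == incr k b).
Proof.
apply/andP/andP => [[/eqP ab /forallP ab']|[lt /eqP ->]].
  have lt : ((b k).+1 < d)%N by rewrite -ab ltn_ord.
  split=> //; apply/eqP/mon_eq => l; rewrite incrE.
  case: eqP => [->|/eqP lk]; first by rewrite lt ab.
  by have := ab' l; rewrite lk => /eqP ->.
rewrite incr_id // eqxx; split=> //; apply/forallP => l; apply/implyP => lk.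
by apply/eqP/val_inj; rewrite /= incrE (negbTE lk).
Qed.

Lemma coversE_decr k a b : covers k a b = (0 < a k)%N && (b == decr k a).
Proof.
rewrite coversE; apply/andP/andP => [[lt /eqP ->]|[pos /eqP ->]].
  by rewrite incr_id // incrK.
by rewrite decr_id prednK // ltn_ord decrK.
Qed.

Lemma mcoef_Emx v b : mcoef (v *m E) b =
  \sum_k (if ((b k).+1 < d)%N then mcoef v (incr k b) * wt (b k).+1 else 0).
Proof.
rewrite /Emx mcoef_mulmx; under eq_bigr do rewrite E_coefE mulr_sumr.
rewrite exchange_big /=; apply: eq_bigr => k _; under eq_bigr do rewrite coversE.
case: ifP => lt /=; last by rewrite big1 // => a _; rewrite mulr0.
rewrite (bigD1 (incr k b)) //= big1 ?addr0 ?eqxx ?incr_id //.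
by move=> a /negbTE ->; rewrite mulr0.
Qed.

Lemma mcoef_Lmx v b : mcoef (v *m Lmx) b =
  \sum_k (if (0 < b k)%N then mcoef v (decr k b) else 0).
Proof.
rewrite (mcoef_mulmx (fun a b => \sum_k (covers k b a)%:R)); under eq_bigr do rewrite mulr_sumr.
rewrite exchange_big /=; apply: eq_bigr => k _; under eq_bigr do rewrite coversE_decr.
case: ifP => pos /=; last by rewrite big1 // => a _; rewrite mulr0.
rewrite (bigD1 (decr k b)) //= big1 ?addr0 ?eqxx ?mulr1 //.
by move=> a /negbTE ->; rewrite mulr0.
Qed.

Lemma wt_succB x : (x < d)%N -> wt x.+1 - wt x = (d - 1)%:R - (2 * x)%:R.
Proof.
move=> lt; apply/eqP; rewrite subr_eq addrAC eq_sym subr_eq /wt -!natrD.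
by apply/eqP; congr (_%:R); nia.
Qed.

Definition LE_term v b k l : F :=
  if ((b k).+1 < d)%N && (0 < incr k b l)%N
  then mcoef v (decr l (incr k b)) * wt (b k).+1 else 0.
Definition EL_term v b l k : F :=
  if (0 < b l)%N && ((decr l b k).+1 < d)%N
  then mcoef v (incr k (decr l b)) * wt (decr l b k).+1 else 0.

Lemma mcoef_LE v b : mcoef (v *m Lmx *m E) b = \sum_k \sum_l LE_term v b k l.
Proof.
rewrite mcoef_Emx; apply: eq_bigr => k _; rewrite /LE_term.
case: ifP => lt /=; last by rewrite big1.
by rewrite mcoef_Lmx mulr_suml; apply: eq_bigr => l _; case: ifP; rewrite ?mul0r.
Qed.

Lemma mcoef_EL v b : mcoef (v *m E *m Lmx) b = \sum_l \sum_k EL_term v b l k.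
Proof.
rewrite mcoef_Lmx; apply: eq_bigr => l _; rewrite /EL_term.
by case: ifP => pos /=; [rewrite mcoef_Emx | rewrite big1].
Qed.

Lemma LE_EL_term_off v b k l : k != l -> LE_term v b k l = EL_term v b l k.
Proof.
move=> kl; rewrite /LE_term /EL_term incr_other // decr_other 1?eq_sym //.
by rewrite decr_incrC // andbC.
Qed.

Lemma LE_EL_term_diag v b k :
  LE_term v b k k - EL_term v b k k = ((d - 1)%:R - (2 * b k)%:R) * mcoef v b.
Proof.
have -> : LE_term v b k k = mcoef v b * wt (b k).+1.
  rewrite /LE_term; case: ifP => [/andP[lt _]|]; first by rewrite incrK.
  case: (ltnP (b k).+1 d) => [lt|ge]; first by rewrite incr_id.
  have -> : (b k).+1 = d by apply/eqP; rewrite eqn_leq ge ltn_ord.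
  by rewrite /wt subnn muln0 mulr0.
have -> : EL_term v b k k = mcoef v b * wt (b k).
  rewrite /EL_term decr_id; case: (posnP (b k)) => [->|pos].
    by rewrite /wt mul0n mulr0.
  by rewrite prednK // ltn_ord decrK.
by rewrite -mulrBr wt_succB // mulrC.
Qed.

Lemma mcoef_LE_sub_EL v b :
  mcoef (v *m Lmx *m E) b - mcoef (v *m E *m Lmx) b
  = ((3 * (d - 1))%:R - (2 * mdeg b)%:R) * mcoef v b.
Proof.
rewrite mcoef_LE mcoef_EL [X in _ - X]exchange_big -sumrB /=.
rewrite (eq_bigr (fun k => ((d - 1)%:R - (2 * b k)%:R) * mcoef v b)); last first.
  move=> k _; rewrite -sumrB (bigD1 k) //= big1 ?addr0; first exact: LE_EL_term_diag.
  by move=> l lk; rewrite LE_EL_term_off 1?eq_sym // subrr.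
rewrite /mdeg !big_ord_recl !big_ord0 /= !mulnDr !natrD !natrM; ring.
Qed.

End Operators.

Section Grading.
Local Open Scope ring_scope.
Variables (F : fieldType) (d : nat).
Local Notation rV := 'rV[F]_(nmon d).
Local Notation E := (Emx F d).
Local Notation L := (Lmx F d).
Implicit Types (v : rV) (i : nat).

Definition degsp i : 'M[F]_(nmon d) := kermx (1%:M - degmx F d i).

Lemma degspP v i : reflect (forall b, mdeg b != i -> mcoef v b = 0) (v <= degsp i)%MS.
Proof.
rewrite sub_kermx mulmxBr mulmx1; apply: (iffP eqP) => [v0 b bi|v0].
  have /= := congr1 (fun w => mcoef w b) v0.
  by rewrite mcoefB mcoef_degmx (negbTE bi) mul0r subr0 mcoef0.
apply: mcoef_eq0 => b; rewrite mcoefB mcoef_degmx.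
by case: eqP => [_|/eqP bi]; rewrite ?mul1r ?subrr // v0 // mul0r subr0.
Qed.

Lemma Emx_degsp v i : (v <= degsp i.+1)%MS -> (v *m E <= degsp i)%MS.
Proof.
move/degspP => v0; apply/degspP => b bi; rewrite mcoef_Emx big1 // => k _.
by case: ifP => // lt; rewrite v0 ?mul0r // mdeg_incr.
Qed.

Lemma Emx_degsp0 v : (v <= degsp 0)%MS -> v *m E = 0.
Proof.
move/degspP => v0; apply: mcoef_eq0 => b; rewrite mcoef_Emx big1 // => k _.
by case: ifP => // lt; rewrite v0 ?mul0r // mdeg_incr.
Qed.

Lemma Lmx_degsp v i : (v <= degsp i)%MS -> (v *m L <= degsp i.+1)%MS.
Proof.
move/degspP => v0; apply/degspP => b bi; rewrite mcoef_Lmx big1 // => k _.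
case: ifP => // pos; rewrite v0 // mdeg_decr //; apply: contra bi => /eqP <-.
by rewrite prednK // /mdeg (bigD1 k) //= (leq_trans pos) ?leq_addr.
Qed.

Lemma LE_EL_degsp v i : (v <= degsp i)%MS ->
  v *m L *m E - v *m E *m L = ((3 * (d - 1))%:R - (2 * i)%:R) *: v.
Proof.
move/degspP => v0; apply: mcoef_inj => b; rewrite mcoefB mcoef_LE_sub_EL mcoefZ.
by case: (eqVneq (mdeg b) i) => [->|bi] //; rewrite v0 // !mulr0.
Qed.

Lemma mcoef_permx v (s : 'S_3) b : mcoef (v *m permx F d s) b = mcoef v (mon_act s^-1%g b).
Proof.
rewrite (mcoef_mulmx (fun a b => (b == mon_act s a)%:R)) (bigD1 (mon_act s^-1%g b)) //=.
rewrite mon_actKV eqxx mulr1 big1 ?addr0 // => a ab.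
by case: eqP => [ba|_]; [rewrite ba mon_actK eqxx in ab | rewrite mulr0].
Qed.

Lemma permx_Emx v (s : 'S_3) : v *m permx F d s *m E = v *m E *m permx F d s.
Proof.
apply: mcoef_inj => b; rewrite mcoef_permx !mcoef_Emx (reindex_inj (@perm_inj _ s)) /=.
by apply: eq_bigr => k _; rewrite mcoef_permx mon_act_incr !ffunE invgK.
Qed.

Lemma permx_Lmx v (s : 'S_3) : v *m permx F d s *m L = v *m L *m permx F d s.
Proof.
apply: mcoef_inj => b; rewrite mcoef_permx !mcoef_Lmx (reindex_inj (@perm_inj _ s)) /=.
by apply: eq_bigr => k _; rewrite mcoef_permx mon_act_decr !ffunE invgK.
Qed.

Definition isotypic (chi : 'S_3 -> F) : 'M[F]_(nmon d) :=
  (\bigcap_(s : 'S_3) kermx (permx F d s - chi s *: 1%:M))%MS.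

Lemma isotypicP chi v :
  reflect (forall s, v *m permx F d s = chi s *: v) (v <= isotypic chi)%MS.
Proof.
have kerP s : (v <= kermx (permx F d s - chi s *: 1%:M))%MS = (v *m permx F d s == chi s *: v).
  by rewrite sub_kermx mulmxBr scalemx1 mul_mx_scalar subr_eq0.
apply: (iffP sub_bigcapmxP) => [vT s | vT s _]; last by rewrite kerP vT.
by apply/eqP; rewrite -kerP vT.
Qed.

Lemma isotypic_Emx chi v : (v <= isotypic chi)%MS -> (v *m E <= isotypic chi)%MS.
Proof. by move/isotypicP => vT; apply/isotypicP => s; rewrite -permx_Emx vT scalemxAl. Qed.

Lemma isotypic_Lmx chi v : (v <= isotypic chi)%MS -> (v *m L <= isotypic chi)%MS.
Proof. by move/isotypicP => vT; apply/isotypicP => s; rewrite -permx_Lmx vT scalemxAl. Qed.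

Lemma mcoef_isotypic chi v s b : (v <= isotypic chi)%MS ->
  mcoef v (mon_act s^-1%g b) = chi s * mcoef v b.
Proof. by move/isotypicP => vT; rewrite -mcoef_permx vT mcoefZ. Qed.

End Grading.

Section BelowMiddle.
Local Open Scope ring_scope.
Variable F : fieldType.
Hypothesis charF0 : [pchar F] =i pred0.
Variable d : nat.
Local Notation rV := 'rV[F]_(nmon d).
Local Notation E := (Emx F d).
Local Notation L := (Lmx F d).
Local Notation degsp := (degsp F d).
Implicit Types (v : rV) (i s : nat).

Lemma submx_mulmx_rows m n (A : 'M[F]_(m, n)) (M U V : 'M[F]_n) :
  (forall v : 'rV_n, (v <= U)%MS -> (v *m M <= V)%MS) -> (A <= U)%MS -> (A *m M <= V)%MS.
Proof. by move=> UV AU; apply/row_subP => k; rewrite row_mul UV // (submx_trans (row_sub k A)). Qed.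

Lemma LE_degsp v i : (2 * i <= 3 * (d - 1))%N -> (v <= degsp i)%MS ->
  v *m L *m E = v *m E *m L + (3 * (d - 1) - 2 * i)%N%:R *: v.
Proof. by move=> le vD; rewrite natrB // -LE_EL_degsp // addrC subrK. Qed.

Lemma ker_Emx_LE_eq0 i (s : nat) v : (2 * i < 3 * (d - 1))%N ->
  (v <= degsp i)%MS -> v *m L *m E = - s%:R *: v -> v *m E = 0 -> v = 0.
Proof.
move=> lti vD vLE vE0; have := LE_degsp (ltnW lti) vD.
rewrite vLE vE0 mul0mx add0r => /eqP; rewrite eq_sym -subr_eq0 -scalerBl opprK -natrD.
rewrite scaler_eq0 (GRing.pcharf0P F).1 // addn_eq0 subn_eq0 leqNgt lti /=.
exact: eqP.
Qed.

(* The standard sl_2 argument: if v L E = -s v, then E v satisfies the same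
   relation one degree lower with s replaced by s + 3(d - 1) - 2i > s, and E
   vanishes in degree 0. *)
Lemma degsp_LE_eq0 i (s : nat) v : (2 * i < 3 * (d - 1))%N ->
  (v <= degsp i)%MS -> v *m L *m E = - s%:R *: v -> v = 0.
Proof.
elim: i s v => [|i IH] s v lti vD vLE; apply: (ker_Emx_LE_eq0 lti vD vLE).
  exact: Emx_degsp0.
set c := (3 * (d - 1) - 2 * i.+1)%N.
have vEL : v *m E *m L = - (s + c)%N%:R *: v.
  have := LE_degsp (ltnW lti) vD; rewrite vLE => /eqP; rewrite -subr_eq => /eqP <-.
  by rewrite natrD opprD scalerDl !scaleNr.
apply: (IH (s + c)%N); first by apply: leq_ltn_trans lti; rewrite leq_mul2l ltnW.
  exact: Emx_degsp.
by rewrite vEL -scalemxAl.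
Qed.

Variable T : 'M[F]_(nmon d).
Hypothesis T_Emx : forall v : rV, (v <= T)%MS -> (v *m E <= T)%MS.
Hypothesis T_Lmx : forall v : rV, (v <= T)%MS -> (v *m L <= T)%MS.

Lemma Emx_degsp_cap i : ((degsp i.+1 :&: T) *m E <= degsp i :&: T)%MS.
Proof.
apply: submx_mulmx_rows (submx_refl _) => v.
by rewrite !sub_capmx => /andP[vD vT]; rewrite Emx_degsp // T_Emx.
Qed.

Lemma Lmx_degsp_cap i : ((degsp i :&: T) *m L <= degsp i.+1 :&: T)%MS.
Proof.
apply: submx_mulmx_rows (submx_refl _) => v.
by rewrite !sub_capmx => /andP[vD vT]; rewrite Lmx_degsp // T_Lmx.
Qed.

Lemma Emx_degsp_cap_onto i : (2 * i < 3 * (d - 1))%N ->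
  (degsp i :&: T <= (degsp i.+1 :&: T) *m E)%MS.
Proof.
move=> lti; set U := (degsp i :&: T)%MS.
have ULE : (U *m (L *m E) <= U)%MS.
  by rewrite mulmxA (submx_trans (submxMr E (Lmx_degsp_cap i))) ?Emx_degsp_cap.
have kerLE : (U :&: kermx (L *m E))%MS = 0.
  apply/row_matrixP => k; rewrite row0; set v := row k _.
  have : (v <= U :&: kermx (L *m E))%MS by apply: row_sub.
  rewrite !sub_capmx sub_kermx => /andP[/andP[vD _] /eqP vLE].
  by apply: (degsp_LE_eq0 (s := 0) lti vD); rewrite mulr0n oppr0 scale0r -mulmxA.
have rkU : \rank (U *m (L *m E)) = \rank U.
  by rewrite -(mxrank_mul_ker U (L *m E)) kerLE mxrank0 addn0.
have U_ULE : (U <= U *m (L *m E))%MS by rewrite -(mxrank_leqif_sup ULE).2 rkU.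
by rewrite (submx_trans U_ULE) // mulmxA submxMr // Lmx_degsp_cap.
Qed.

Lemma rank_kerEmx_degsp_cap i : (2 * i < 3 * (d - 1))%N ->
  (\rank (kermx E :&: degsp i.+1 :&: T) + \rank (degsp i :&: T) = \rank (degsp i.+1 :&: T))%N.
Proof.
move=> lti; rewrite -capmxA capmxC -(mxrank_mul_ker (degsp i.+1 :&: T)%MS E) addnC.
congr (_ + _)%N.
by apply/eqmx_rank; rewrite Emx_degsp_cap Emx_degsp_cap_onto.
Qed.

End BelowMiddle.

Section OrbitBasis.
Local Open Scope ring_scope.
Variables (F : fieldType) (d : nat).
Local Notation rV := 'rV[F]_(nmon d).
Local Notation degsp := (degsp F d).
Implicit Types (a b : mon d) (v : rV).

Variable chi : 'S_3 -> F.
Hypothesis chiM : {morph chi : s t / (s * t)%g >-> s * t}.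
Hypothesis chiV : forall s, chi s^-1%g = chi s.

Definition orbit_vec a : rV := \row_i \sum_(s | mon_act s a == enum_val i) chi s.

Lemma mcoef_orbit_vec a b : mcoef (orbit_vec a) b = \sum_(s | mon_act s a == b) chi s.
Proof. by rewrite /mcoef mxE enum_rankK. Qed.

Lemma orbit_vec_degsp a : (orbit_vec a <= degsp (mdeg a))%MS.
Proof.
apply/degspP => b ba; rewrite mcoef_orbit_vec big1 // => s /eqP sab.
by rewrite -sab mdeg_act eqxx in ba.
Qed.

Lemma orbit_vec_isotypic a : (orbit_vec a <= isotypic d chi)%MS.
Proof.
apply/isotypicP => t; apply: mcoef_inj => b.
rewrite mcoef_permx mcoefZ !mcoef_orbit_vec mulr_sumr (reindex_inj (mulIg t^-1%g)) /=.
apply: eq_big => [s | s _]; last by rewrite chiM chiV mulrC.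
by rewrite -(inj_eq (can_inj (mon_actK t))) mon_actKV mon_actM -mulgA mulVg mulg1.
Qed.

(* S must contain one point of each orbit in degree j carrying a nonzero
   chi-isotypic vector; on the other orbits some stabiliser element has
   chi s != 1, which forces such vectors to vanish. *)
Variables (j : nat) (S : {set mon d}).
Hypothesis S_mdeg : {in S, forall a, mdeg a = j}.
Hypothesis S_cover : forall b, mdeg b = j ->
  (exists s, mon_act s b \in S) \/ (exists2 s, mon_act s b = b & chi s != 1).
Hypothesis S_transversal : forall a s, a \in S -> mon_act s a \in S -> mon_act s a = a.
Hypothesis S_stab : {in S, forall a, \sum_(s | mon_act s a == a) chi s != 0}.

Lemma degsp_isotypic_eq0 v : (v <= degsp j)%MS -> (v <= isotypic d chi)%MS ->
  {in S, forall a, mcoef v a = 0} -> v = 0.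
Proof.
move=> vD vT vS; apply: mcoef_eq0 => b.
have [bj|bj] := eqVneq (mdeg b) j; last by move/degspP: vD; apply.
case: (S_cover bj) => [[s sbS] | [s sb chis]].
  by rewrite -(mon_actK s b) (mcoef_isotypic _ _ vT) vS // mulr0.
have := mcoef_isotypic s b vT; rewrite -{1}sb mon_actK => /eqP.
rewrite -subr_eq0 -{1}(mul1r (mcoef v b)) -mulrBl mulf_eq0 subr_eq0 eq_sym.
by rewrite (negbTE chis) => /eqP.
Qed.

Definition restr : 'M[F]_(nmon d, #|S|) := \matrix_(i, k) (enum_val i == enum_val k)%:R.

Lemma restrE v k : (v *m restr) 0 k = mcoef v (enum_val k).
Proof.
rewrite mxE (bigD1 (enum_rank (enum_val k))) //= big1 ?addr0.
  by rewrite mxE enum_rankK eqxx mulr1.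
move=> i ik; rewrite mxE.
by case: eqP => [ki|_]; [rewrite -ki enum_valK eqxx in ik | rewrite mulr0].
Qed.

Lemma orbit_vec_restr k :
  orbit_vec (enum_val k) *m restr
  = (\sum_(s | mon_act s (enum_val k) == enum_val k) chi s) *: delta_mx 0 k.
Proof.
apply/rowP => l; rewrite restrE mcoef_orbit_vec !mxE eqxx /=.
have [->|lk] := eqVneq l k; first by rewrite mulr1.
rewrite mulr0 big1 // => s /eqP skl.
have sk : mon_act s (enum_val k) = enum_val k.
  by apply: S_transversal; rewrite ?skl; apply: enum_valP.
by move: lk; rewrite -(inj_eq enum_val_inj) -skl sk eqxx.
Qed.

Lemma rank_degsp_isotypic : \rank (degsp j :&: isotypic d chi) = #|S|.
Proof.
set W := (degsp j :&: isotypic d chi)%MS.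
have kerW : (W :&: kermx restr)%MS = 0.
  apply/row_matrixP => k; rewrite row0; set v := row k _.
  have : (v <= W :&: kermx restr)%MS by apply: row_sub.
  rewrite !sub_capmx sub_kermx => /andP[/andP[vD vT] /eqP v0].
  apply: degsp_isotypic_eq0 => // a aS.
  by rewrite -(enum_rankK_in aS aS) -restrE v0 mxE.
have onto : (1%:M <= W *m restr)%MS.
  apply/row_subP => k; rewrite row1.
  have kS : enum_val k \in S by apply: enum_valP.
  rewrite -[delta_mx _ _](scalerK (S_stab kS)) -orbit_vec_restr scalemx_sub //.
  by rewrite submxMr // sub_capmx -{1}(S_mdeg kS) orbit_vec_degsp orbit_vec_isotypic.
rewrite -(mxrank_mul_ker W restr) kerW mxrank0 addn0.
by apply/eqP; rewrite eqn_leq rank_leq_col -{1}(mxrank1 F #|S|) mxrankS.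
Qed.

End OrbitBasis.

Section Multiplicities.
Local Open Scope ring_scope.
Variable F : fieldType.
Hypothesis charF0 : [pchar F] =i pred0.
Variable d : nat.

Definition sorted_deg j := [set a : mon d | sorted_mon a && (mdeg a == j)].
Definition strict_deg j := [set a : mon d | strict_mon a && (mdeg a == j)].

Definition sgn (s : 'S_3) : F := (-1) ^+ odd_perm s.

Lemma sgnM : {morph sgn : s t / (s * t)%g >-> s * t}.
Proof. by move=> s t; rewrite /sgn odd_permM signr_addb. Qed.

Lemma sgnV s : sgn s^-1%g = sgn s.
Proof. by rewrite /sgn odd_permV. Qed.

Lemma rank_degsp_triv j : \rank (degsp F d j :&: isotypic d (fun=> 1))%MS = #|sorted_deg j|.
Proof.
apply: rank_degsp_isotypic => [s t | s | a | b bj | a s | a].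
- by rewrite mulr1.
- by [].
- by rewrite inE => /andP[_ /eqP].
- have [s sorted_s] := exists_sorted_act b.
  by left; exists s; rewrite inE sorted_s mdeg_act bj eqxx.
- by rewrite !inE => /andP[sa _] /andP[ssa _]; apply: sorted_act_eq.
- rewrite (eq_bigr (fun=> 1%:R)) // -natr_sum (GRing.pcharf0P F).1 //.
  by rewrite (bigD1 1%g) ?mon_act1.
Qed.

Lemma rank_degsp_sign j : \rank (degsp F d j :&: isotypic d sgn)%MS = #|strict_deg j|.
Proof.
apply: rank_degsp_isotypic => [|| a | b bj | a s | a]; [exact: sgnM | exact: sgnV | | | |].
- by rewrite inE => /andP[_ /eqP].
- have [s sorted_s] := exists_sorted_act b.
  have [strict_s | nstrict_s] := boolP (strict_mon (mon_act s b)).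
    by left; exists s; rewrite inE strict_s mdeg_act bj eqxx.
  right; move: sorted_s nstrict_s; set c := mon_act s b => sorted_c nstrict_c.
  (* a sorted, non strict monomial has two equal exponents p, q; the conjugate of
     the transposition (p q) then fixes b and has sign -1 *)
  have [p [q [pq cpq]]] : exists p q, p != q /\ c p = c q.
    case: (eqVneq (c i0 : nat) (c i1)) => [e01|n01].
      by exists i0, i1; split => //; apply: val_inj.
    exists i1, i2; split => //; apply: val_inj.
    by move: n01 sorted_c nstrict_c; rewrite /sorted_mon /strict_mon /=; lia.
  exists (s * tperm p q * s^-1)%g.
    by rewrite -!mon_actM tperm_act_eq // mon_actK.
  rewrite !sgnM sgnV mulrAC -expr2 /sgn sqrr_sign mul1r odd_tperm pq /=.
  by rewrite -subr_eq0 -opprD oppr_eq0 -mulr2n (GRing.pcharf0P F).1.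
- by rewrite !inE => /andP[sa _] /andP[ssa _]; apply: sorted_act_eq; apply: strict_sorted.
- rewrite inE => /andP[sa _].
  rewrite (eq_bigl (pred1 1%g)) ?big_pred1_eq /sgn ?odd_perm1 ?oner_neq0 // => s /=.
  by apply/eqP/eqP => [|->]; [apply: strict_act_eq | rewrite mon_act1].
Qed.

Lemma triv_succ i : (2 * i < 3 * (d - 1))%N ->
  (triv F d i.+1 + #|sorted_deg i| = #|sorted_deg i.+1|)%N.
Proof.
move=> lti; rewrite -!rank_degsp_triv -(rank_kerEmx_degsp_cap charF0 _ _ lti);
  [ | exact: isotypic_Emx | exact: isotypic_Lmx].
congr (\rank _ + _)%N; rewrite /triv /triv_space /KerEj /isotypic; congr (_ :&: _)%MS.
by apply: eq_bigr => s _; rewrite scale1r.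
Qed.

Lemma sign_succ i : (2 * i < 3 * (d - 1))%N ->
  (sign F d i.+1 + #|strict_deg i| = #|strict_deg i.+1|)%N.
Proof.
move=> lti; rewrite -!rank_degsp_sign -(rank_kerEmx_degsp_cap charF0 _ _ lti) //;
  [exact: isotypic_Emx | exact: isotypic_Lmx].
Qed.

End Multiplicities.

Lemma card_ord_interval d lo hi : hi < d -> #|[set b : 'I_d | lo <= b <= hi]| = hi.+1 - lo.
Proof.
move=> hid; rewrite -sum1dep_card -(big_mkord (fun b => lo <= b <= hi) (fun=> 1)).
have [lohi|hilo] := leqP lo hi.+1; last by rewrite big1 => [|b]; lia.
rewrite (big_cat_nat (leq0n lo) (leq_trans lohi hid)) (big_cat_nat lohi hid) /=.
rewrite big_nat_cond big1 => [|b /andP[/andP[_ blo] bP]]; last by lia.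
rewrite [X in _ + (_ + X)]big_nat_cond [X in _ + (_ + X)]big1
  => [|b /andP[/andP[hib _] bP]]; last by lia.
rewrite big_nat_cond (eq_bigl (fun b => (lo <= b < hi.+1) && true)) => [|b]; last by lia.
by rewrite -big_nat_cond sum_nat_const_nat muln1 add0n addn0.
Qed.

Section Counting.
Variable d : nat.
Implicit Types (a b : mon d) (X : {set mon d}).

Lemma card_setID X (p : pred (mon d)) :
  #|X| = #|[set a in X | p a]| + #|[set a in X | ~~ p a]|.
Proof.
by rewrite -(cardsID [set a | p a] X); congr (_ + _); apply: eq_card => a; rewrite !inE andbC.
Qed.

(* Raising the largest exponent is a bijection between the monomials of degree
   i that can be raised and those of degree i + 1 satisfying Q. *)
Lemma card_incr_top (P Q : pred (mon d)) i :
  (forall a, (a i2).+1 < d -> P a -> P (incr i2 a) && Q (incr i2 a)) ->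
  (forall a, P a -> Q a -> 0 < a i2 /\ P (decr i2 a)) ->
  #|[set a in [set a | P a && (mdeg a == i)] | (a i2).+1 != d]|
  = #|[set a in [set a | P a && (mdeg a == i.+1)] | Q a]|.
Proof.
move=> PQ_incr PQ_decr; set Y := [set a in _ | _].
have lt_top a : a \in Y -> (a i2).+1 < d by rewrite !inE ltn_neqAle ltn_ord andbT => /andP[_].
have -> : [set a in [set a | P a && (mdeg a == i.+1)] | Q a] = incr i2 @: Y.
  apply/setP => a; rewrite !inE; apply/idP/imsetP => [/andP[/andP[Pa /eqP ai] Qa] | [b bY ->]].
    have [pos Pda] := PQ_decr a Pa Qa.
    exists (decr i2 a); last by rewrite decrK.
    by rewrite !inE Pda mdeg_decr // ai eqxx decr_id prednK // neq_ltn ltn_ord.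
  have := bY; rewrite !inE => /andP[/andP[Pb /eqP bi] _].
  by have /andP[-> ->] := PQ_incr b (lt_top b bY) Pb; rewrite mdeg_incr ?lt_top // bi eqxx.
rewrite card_in_imset // => a b aY bY ab.
by rewrite -(incrK (lt_top a aY)) ab incrK ?lt_top.
Qed.

Lemma card_by_mid X lo hi : hi < d ->
  {in X &, forall a b, a i1 = b i1 :> nat -> a = b} ->
  {in X, forall a, lo <= a i1 <= hi} ->
  (forall n : 'I_d, lo <= n <= hi -> exists2 a, a \in X & a i1 = n :> nat) ->
  #|X| = hi.+1 - lo.
Proof.
move=> hid inj_mid mid_bounds mid_onto; rewrite -(card_ord_interval lo hid).
rewrite -(card_in_imset (f := fun a : mon d => a i1) (D := X)) => [|a b aX bX ab]; last first.
  by apply: inj_mid => //; rewrite ab.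
apply: eq_card => n; rewrite [in RHS]inE; apply/imsetP/idP => [[a aX ->]|/mid_onto[a aX an]].
  exact: mid_bounds.
by exists a => //; apply: val_inj.
Qed.

Definition mk3 (x y z : 'I_d) : mon d :=
  [ffun k => if k == i0 then x else if k == i1 then y else z].

Lemma mk3E x y z : [/\ mk3 x y z i0 = x, mk3 x y z i1 = y & mk3 x y z i2 = z].
Proof. by rewrite !ffunE. Qed.

Lemma incr_i2E a : (a i2).+1 < d ->
  [/\ incr i2 a i0 = a i0 :> nat, incr i2 a i1 = a i1 :> nat & incr i2 a i2 = (a i2).+1 :> nat].
Proof. by move=> lt; rewrite !incrE lt. Qed.

Lemma decr_i2E a :
  [/\ decr i2 a i0 = a i0 :> nat, decr i2 a i1 = a i1 :> nat & decr i2 a i2 = (a i2).-1 :> nat].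
Proof. by rewrite !decrE. Qed.

End Counting.

(* lia does not reason about [nat_of_ord] applied to finfun values; forget it. *)
Local Ltac forget_ords :=
  repeat match goal with |- context [nat_of_ord ?x] => move: (nat_of_ord x) => ? end.

Section OrbitCounts.
Variable d : nat.
Implicit Types (a b : mon d).

Lemma card_sorted_succ i :
  #|sorted_deg d i.+1| + #|[set a in sorted_deg d i | (a i2).+1 == d]|
  = #|sorted_deg d i| + #|[set a in sorted_deg d i.+1 | a i1 == a i2 :> nat]|.
Proof.
have incr_ok a : (a i2).+1 < d -> sorted_mon a ->
    sorted_mon (incr i2 a) && (incr i2 a i1 != incr i2 a i2 :> nat).
  by move/incr_i2E => [e0 e1 e2]; rewrite /sorted_mon e0 e1 e2; lia.
have decr_ok a : sorted_mon a -> a i1 != a i2 :> nat -> 0 < a i2 /\ sorted_mon (decr i2 a).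
  by case: (decr_i2E a) => e0 e1 e2; rewrite /sorted_mon e0 e1 e2; lia.
have := card_incr_top i incr_ok decr_ok.
rewrite (card_setID (sorted_deg d i.+1) (fun a => a i1 == a i2 :> nat)).
rewrite (card_setID (sorted_deg d i) (fun a => (a i2).+1 == d)) /sorted_deg.
by move=> ->; rewrite addnAC [RHS]addnC addnA.
Qed.

Lemma card_strict_succ i :
  #|strict_deg d i.+1| + #|[set a in strict_deg d i | (a i2).+1 == d]|
  = #|strict_deg d i| + #|[set a in strict_deg d i.+1 | a i2 == (a i1).+1 :> nat]|.
Proof.
have incr_ok a : (a i2).+1 < d -> strict_mon a ->
    strict_mon (incr i2 a) && (incr i2 a i2 != (incr i2 a i1).+1 :> nat).
  by move/incr_i2E => [e0 e1 e2]; rewrite /strict_mon e0 e1 e2; lia.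
have decr_ok a : strict_mon a -> a i2 != (a i1).+1 :> nat -> 0 < a i2 /\ strict_mon (decr i2 a).
  by case: (decr_i2E a) => e0 e1 e2; rewrite /strict_mon e0 e1 e2; lia.
have := card_incr_top i incr_ok decr_ok.
rewrite (card_setID (strict_deg d i.+1) (fun a => a i2 == (a i1).+1 :> nat)).
rewrite (card_setID (strict_deg d i) (fun a => (a i2).+1 == d)) /strict_deg.
by move=> ->; rewrite addnAC [RHS]addnC addnA.
Qed.

Lemma card_sorted_mid j : j %/ 2 < d ->
  #|[set a in sorted_deg d j | a i1 == a i2 :> nat]| = (j %/ 2).+1 - (j + 2) %/ 3.
Proof.
move=> hjd; apply: card_by_mid => // [a b | a | n bounds_n].
- rewrite !inE /sorted_mon !mdeg3 => /andP[/andP[sa ja] ea] /andP[/andP[sb jb] eb] eab.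
  by apply: mon_eq3; move: sa ja ea sb jb eb eab; forget_ords; lia.
- by rewrite !inE /sorted_mon mdeg3; forget_ords; lia.
have lt0 : j - 2 * n < d by move: (ltn_ord n) bounds_n; forget_ords; lia.
have [e0 e1 e2] := mk3E (Ordinal lt0) n n.
exists (mk3 (Ordinal lt0) n n); last by rewrite e1.
rewrite !inE /sorted_mon mdeg3 e0 e1 e2 /=.
by move: bounds_n; forget_ords; lia.
Qed.

Lemma card_sorted_top i : d.-1 <= i -> i - d.-1 < d ->
  #|[set a in sorted_deg d i | (a i2).+1 == d]| = (i - d.-1).+1 - (i - d.-1 + 1) %/ 2.
Proof.
move=> hid hmd; apply: card_by_mid => // [a b | a | n bounds_n].
- rewrite !inE /sorted_mon !mdeg3 => /andP[/andP[sa ia] ea] /andP[/andP[sb ib] eb] eab.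
  by apply: mon_eq3; move: sa ia ea sb ib eb eab; forget_ords; lia.
- by rewrite !inE /sorted_mon mdeg3; forget_ords; lia.
have lt0 : i - d.-1 - n < d by move: (ltn_ord n) bounds_n; forget_ords; lia.
have lt2 : d.-1 < d by move: (ltn_ord n); lia.
have [e0 e1 e2] := mk3E (Ordinal lt0) n (Ordinal lt2).
exists (mk3 (Ordinal lt0) n (Ordinal lt2)); last by rewrite e1.
rewrite !inE /sorted_mon mdeg3 e0 e1 e2 /=.
by move: (ltn_ord n) bounds_n; forget_ords; lia.
Qed.

Lemma card_strict_mid j : 0 < j -> ((j - 1) %/ 2).+1 < d ->
  #|[set a in strict_deg d j | a i2 == (a i1).+1 :> nat]| = ((j - 1) %/ 2).+1 - (j + 2) %/ 3.
Proof.
move=> j0 hjd; apply: card_by_mid => [| a b | a | n bounds_n]; first by lia.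
- rewrite !inE /strict_mon !mdeg3 => /andP[/andP[sa ja] ea] /andP[/andP[sb jb] eb] eab.
  by apply: mon_eq3; move: sa ja ea sb jb eb eab; forget_ords; lia.
- by rewrite !inE /strict_mon mdeg3; forget_ords; lia.
have lt0 : j - 1 - 2 * n < d by move: (ltn_ord n) bounds_n; forget_ords; lia.
have lt2 : n.+1 < d by move: bounds_n; forget_ords; lia.
have [e0 e1 e2] := mk3E (Ordinal lt0) n (Ordinal lt2).
exists (mk3 (Ordinal lt0) n (Ordinal lt2)); last by rewrite e1.
rewrite !inE /strict_mon mdeg3 e0 e1 e2 /=.
by move: bounds_n; forget_ords; lia.
Qed.

Lemma card_strict_top i : d.-1 <= i -> i - d.-1 < d.-1 ->
  #|[set a in strict_deg d i | (a i2).+1 == d]| = (i - d.-1).+1 - ((i - d.-1) %/ 2).+1.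
Proof.
move=> hid hmd; apply: card_by_mid => [| a b | a | n bounds_n]; first by lia.
- rewrite !inE /strict_mon !mdeg3 => /andP[/andP[sa ia] ea] /andP[/andP[sb ib] eb] eab.
  by apply: mon_eq3; move: sa ia ea sb ib eb eab; forget_ords; lia.
- by rewrite !inE /strict_mon mdeg3; move: (ltn_ord (a i2)); forget_ords; lia.
have lt0 : i - d.-1 - n < d by move: (ltn_ord n) bounds_n; forget_ords; lia.
have lt2 : d.-1 < d by move: (ltn_ord n); lia.
have [e0 e1 e2] := mk3E (Ordinal lt0) n (Ordinal lt2).
exists (mk3 (Ordinal lt0) n (Ordinal lt2)); last by rewrite e1.
rewrite !inE /strict_mon mdeg3 e0 e1 e2 /=.
by move: bounds_n; forget_ords; lia.
Qed.

End OrbitCounts.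

Section ClosedForms.
Variable F : fieldType.
Hypothesis charF0 : [pchar F]%R =i pred0.
Variable d : nat.

Lemma triv_closed i : d.-1 <= i -> 2 * i < 3 * (d - 1) ->
  triv F d i.+1 + ((i - d.-1).+1 - (i - d.-1 + 1) %/ 2) = (i.+1 %/ 2).+1 - (i.+1 + 2) %/ 3.
Proof.
move=> hid lti; have := triv_succ charF0 lti; have := card_sorted_succ d i.
by rewrite card_sorted_mid ?card_sorted_top //; lia.
Qed.

Lemma sign_closed i : d.-1 <= i -> 2 * i < 3 * (d - 1) ->
  sign F d i.+1 + ((i - d.-1).+1 - ((i - d.-1) %/ 2).+1) = (i %/ 2).+1 - (i.+1 + 2) %/ 3.
Proof.
move=> hid lti; have := sign_succ charF0 lti; have := card_strict_succ d i.
by rewrite card_strict_mid ?card_strict_top //; lia.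
Qed.

End ClosedForms.

Theorem theorem5p2 (F : closedFieldType) (charF0 : [pchar F]%R =i pred0)
  (d j : nat) (hd : 3 <= d) (hdj : d <= j) (hj : j <= (3 * (d - 1)) %/ 2) :
  (odd d -> ~~ odd (j - d) ->
     triv F d j = (3 * d - 2 * j - 3) %/ 6 /\ sign F d j = (3 * d - 2 * j - 3) %/ 6 + 1)
  /\ (odd d -> odd (j - d) ->
     triv F d j = (3 * d - 2 * j - 3) %/ 6 + 1 /\ sign F d j = (3 * d - 2 * j - 3) %/ 6)
  /\ (~~ odd d ->
     triv F d j = (3 * d - 2 * j) %/ 6 /\ sign F d j = (3 * d - 2 * j) %/ 6).
Proof.
case: j hdj hj => [|i] hdj hj; first by lia.
have hid : d.-1 <= i by lia.
have lti : 2 * i < 3 * (d - 1) by lia.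
have := triv_closed charF0 hid lti; have := sign_closed charF0 hid lti.
by split; [|split] => *; split; lia.
Qed.
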